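(* Let $\Gamma$ be a quantum graph satisfying the Kostrykin–Schrader conditions at every vertex, and let the finite group $K$ act freely on $\Gamma$ (no non-identity element fixes a vertex or an edge), with no element mapping a vertex to an adjacent vertex. Then for every finite-dimensional complex representation $R$ of $K$ there exist choices in the recipe (global basis, orbit representatives, edge bases) such that the resulting quotient $\Gamma/R$ satisfies the Kostrykin–Schrader conditions at every vertex.
   Context: Quantum graphs. A quantum graph $\Gamma$ has a finite vertex set $V$ and finite edge set $E$; each edge $e$ has length $l_e>0$ and a coordinate identifying it with $[0,l_e]$. Functions are tuples $f=(f|_e)$, $f|_e\in W^{2,2}([0,l_e])$. At a vertex $v$ of degree $d_v$ the conditions are $A_vf|_v+B_vf'|_v=0$, where $A_v,B_v$ are complex matrices with $d_v$ columns indexed by the incident edges, $f|_v$ is the vector of values at $v$ and $f'|_v$ the vector of outgoing derivatives at $v$. The Kostrykin–Schrader conditions at $v$ are: $\mathrm{rank}(A_v\,|\,B_v)=d_v$ and $A_vB_v^\dagger=B_vA_v^\dagger$. Setting. $K$ is a finite group acting on $\Gamma$ (permuting vertices and edges, preserving incidence and lengths, mapping edges isometrically, preserving vertex conditions), acting on functions by $(gf)(x)=f(g^{-1}x)$; assume no element of $K$ maps a vertex to a vertex adjacent to it. $K_x$ denotes the stabilizer of a vertex or edge $x$. $R$ is a $d$-dimensional complex representation of $K$ with homomorphism $\rho_R:K\to GL(V^R)$. For bases $C=(c_1,\dots,c_d)$, $C'$ of $V^R$ and linear $T$, $[T]^{C}_{C'}$ is the matrix whose $j$-th column is the $C'$-coordinate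 vector of $T(c_j)$. Recipe for $\Gamma/R$. Choose: a global basis $B$ of $V^R$; representatives $\tilde e^1,\dots,\tilde e^I$ of the $K$-orbits on $E$ and $\tilde v_1,\dots,\tilde v_N$ of the $K$-orbits on $V$; for each $i$ a basis $B^i=(b^i_1,\dots,b^i_d)$ of $V^R$ such that $b^i_1,\dots,b^i_{d_i}$ is a basis of the subspace of vectors fixed by $\rho_R(K_{\tilde e^i})$ and $b^i_{d_i+1},\dots,b^i_d$ is a basis of the sum of the nontrivial isotypic components of $R$ restricted to $K_{\tilde e^i}$. The quotient has vertices $v_1,\dots,v_N$ and edges $e^i_j$ ($1\le i\le I$, $1\le j\le d_i$), $e^i_j$ of length $l_{\tilde e^i}$ with the coordinate of $\tilde e^i$; if $\tilde e^i$ joins a vertex of the orbit of $\tilde v_k$ to one of the orbit of $\tilde v_{k'}$, then each $e^i_j$ joins $v_k$ to $v_{k'}$, endpoints corresponding. Vertex conditions at $v_k$: write the edges at $\tilde v_k$ as $g_1\tilde e^{\nu_1},\dots,g_n\tilde e^{\nu_n}$ ($g_l\in K$, $n=d_{\tilde v_k}$) and let $A_{\tilde v_k},B_{\tilde v_k}$ be its condition matrices with columns in this order; let $\mu_1,\dots,\mu_m$ be the distinct values among the $\nu_l$; let $\Theta'$ be the $n\times m$ matrix with $\Theta'_{l,l'}=1$ if $\nu_l=\mu_{l'}$ and $0$ otherwise; let $\Theta$ be obtained from $\Theta'\otimes I_d$ by deleting the columns $(l'-1)d+j$ with $d_{\mu_{l'}}<j\le d$ (the remaining columns, indexed by $(l',j)$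 with $j\le d_{\mu_{l'}}$, correspond to the edges $e^{\mu_{l'}}_j$ at $v_k$). With $D=\mathrm{diag}\big(([\rho_R(g_1^{-1})]^{B}_{B^{\nu_1}})^T,\dots,([\rho_R(g_n^{-1})]^{B}_{B^{\nu_n}})^T\big)$, set $A_{v_k}=(A_{\tilde v_k}\otimes I_d)D\Theta$, $B_{v_k}=(B_{\tilde v_k}\otimes I_d)D\Theta$ (possibly non-square); the conditions at $v_k$ are $A_{v_k}f|_{v_k}+B_{v_k}f'|_{v_k}=0$. *)

From HB Require Import structures.
From mathcomp Require Import all_boot all_order all_algebra all_fingroup.
From mathcomp Require Import mxrepresentation.
Set Implicit Arguments.
Unset Strict Implicit.
Unset Printing Implicit Defensive.
Import GRing.Theory Num.Theory.
Local Open Scope ring_scope.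

(* Edge ends are pairs (e, b): b = false is the end at coordinate 0,
   b = true the end at coordinate l_e.  At vertex v the columns of the
   condition matrices are indexed by 'I_(qdeg v), column l corresponding to
   the incident edge end (qinc v l). *)
Record qgraph (C : numClosedFieldType) := QGraph {
  qV : finType;
  qE : finType;
  qlen : qE -> C;
  qsrc : qE -> qV;
  qtgt : qE -> qV;
  qdeg : qV -> nat;
  qinc : forall v : qV, 'I_(qdeg v) -> (qE * bool)%type;
  qrows : qV -> nat;
  qA : forall v : qV, 'M[C]_(qrows v, qdeg v);
  qB : forall v : qV, 'M[C]_(qrows v, qdeg v) }.

Arguments qV {C} q : rename.
Arguments qE {C} q.
Arguments qlen {C q} e.
Arguments qsrc {C q} e.
Arguments qtgt {C q} e.
Arguments qdeg {C q} v.
Arguments qinc {C q} v l.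
Arguments qrows {C q} v.
Arguments qA {C q} v.
Arguments qB {C q} v.

Definition endpt (C : numClosedFieldType) (G : qgraph C) (x : (qE G * bool)%type)
  : qV G := if x.2 then qtgt x.1 else qsrc x.1.

Definition wf_qgraph (C : numClosedFieldType) (G : qgraph C) : Prop :=
  (forall e : qE G, 0 < qlen e) /\
  (forall v, injective (@qinc _ G v)) /\
  (forall v l, endpt (@qinc _ G v l) = v) /\
  (forall v x, endpt x = v -> exists l, @qinc _ G v l = x).

Definition adjmx (C : numClosedFieldType) m n (M : 'M[C]_(m, n)) : 'M[C]_(n, m) :=
  (map_mx (fun x => x^*) M)^T.

Definition KS (C : numClosedFieldType) r n (A B : 'M[C]_(r, n)) (dv : nat) : Prop :=
  \rank (row_mx A B) = dv /\ A *m adjmx B = B *m adjmx A.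

(* actF g e = true iff g maps edge e onto actE g e reversing the coordinate *)
Record qaction (C : numClosedFieldType) (G : qgraph C) (gT : finGroupType) :=
  QAction {
  actV : gT -> qV G -> qV G;
  actE : gT -> qE G -> qE G;
  actF : gT -> qE G -> bool }.

Section Action.
Variables (C : numClosedFieldType) (G : qgraph C) (gT : finGroupType).
Variable (a : qaction G gT).

Definition actEnd (g : gT) (x : (qE G * bool)%type) : (qE G * bool)%type :=
  (actE a g x.1, addb x.2 (actF a g x.1)).

(* (transfer g v *m x) is the vector of values at (actV g v) of g f, when x is
   the vector of values of f at v  (g f)(y) = f(g^-1 y) *)
Definition transfer (g : gT) (v : qV G) : 'M[C]_(qdeg (actV a g v), qdeg v) :=
  \matrix_(l', l) ((qinc (actV a g v) l' == actEnd g (qinc v l))%:R).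

Definition is_qaction : Prop :=
  (forall v, actV a 1%g v = v) /\ (forall e, actE a 1%g e = e) /\
  (forall e, actF a 1%g e = false) /\
  (forall g h v, actV a (g * h)%g v = actV a g (actV a h v)) /\
  (forall g h e, actE a (g * h)%g e = actE a g (actE a h e)) /\
  (forall g h e, actF a (g * h)%g e = addb (actF a h e) (actF a g (actE a h e))) /\
  (forall g x, endpt (actEnd g x) = actV a g (endpt x)) /\
  (forall g e, qlen (actE a g e) = qlen e) /\
  (forall g v (x y : 'cV[C]_(qdeg v)),
      qA v *m x + qB v *m y = 0 ->
      qA (actV a g v) *m (transfer g v *m x) + qB (actV a g v) *m (transfer g v *m y) = 0).

Definition free_action : Prop :=
  (forall g v, actV a g v = v -> g = 1%g) /\ (forall g e, actE a g e = e -> g = 1%g).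

Definition adjacent (u w : qV G) : Prop :=
  exists e, (qsrc e = u /\ qtgt e = w) \/ (qsrc e = w /\ qtgt e = u).

Definition no_adjacent_move : Prop := forall g v, ~ adjacent v (actV a g v).

Definition Stab (e : qE G) : {set gT} := [set h | actE a h e == e].

End Action.

Section LinAlg.
Variables (C : numClosedFieldType) (gT : finGroupType) (d : nat).
Variable rG : mx_representation C [set: gT] d.

(* index (l, a) <-> (l-1) d + a, with l-major ordering *)
Definition unflat m n (k : 'I_(m * n)) : ('I_m * 'I_n)%type :=
  enum_val (cast_ord (esym (mxvec_cast m n)) k).

Definition kron r n p q (A : 'M[C]_(r, n)) (B : 'M[C]_(p, q)) : 'M[C]_(r * p, n * q) :=
  \matrix_(i, j) (A (unflat i).1 (unflat j).1 * B (unflat i).2 (unflat j).2).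

(* bases of V^R = 'cV_d are invertible matrices (basis vectors = columns);
   [T]^P_Q for T with standard matrix M *)
Definition cob (P Q M : 'M[C]_d) : 'M[C]_d := invmx Q *m M *m P.

Definition fixedv (H : {set gT}) (v : 'cV[C]_d) : Prop :=
  forall h, h \in H -> rG h *m v = v.

Definition in_span_cols (P : 'M[C]_d) (J : pred 'I_d) (v : 'cV[C]_d) : Prop :=
  exists c : 'cV[C]_d, (forall j, ~~ J j -> c j 0 = 0) /\ v = P *m c.

(* subspaces of V^R as row spaces of W : 'M_d (vector v <-> row v^T) *)
Definition invariant_sub (H : {set gT}) (W : 'M[C]_d) : Prop :=
  forall h, h \in H -> (W *m (rG h)^T <= W)%MS.

Definition irreducible_sub (H : {set gT}) (W : 'M[C]_d) : Prop :=
  invariant_sub H W /\ W != 0 /\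
  forall U : 'M[C]_d, invariant_sub H U -> (U <= W)%MS -> U = 0 \/ (U == W)%MS.

Definition nontrivial_sub (H : {set gT}) (W : 'M[C]_d) : Prop :=
  exists2 h, h \in H & W *m (rG h)^T != W.

Definition in_nontriv_isotypic (H : {set gT}) (v : 'cV[C]_d) : Prop :=
  exists n (Ws : 'I_n -> 'M[C]_d),
    (forall i, irreducible_sub H (Ws i) /\ nontrivial_sub H (Ws i)) /\
    (v^T <= (\sum_(i < n) Ws i)%MS)%MS.

End LinAlg.

Record qchoice (C : numClosedFieldType) (G : qgraph C) (gT : finGroupType) (d : nat) :=
  QChoice {
  cPB : 'M[C]_d;                       (* global basis B *)
  cI : nat;
  cRE : 'I_cI -> qE G;                 (* edge orbit representatives *)
  cN : nat;
  cRV : 'I_cN -> qV G;                 (* vertex orbit representatives *)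
  cdd : 'I_cI -> nat;
  cPE : 'I_cI -> 'M[C]_d;              (* edge bases B^i *)
  cnu : forall k : 'I_cN, 'I_(qdeg (cRV k)) -> 'I_cI;
  cg  : forall k : 'I_cN, 'I_(qdeg (cRV k)) -> gT }.

Arguments cPB {C G gT d} q.
Arguments cI {C G gT d} q.
Arguments cRE {C G gT d} q i.
Arguments cN {C G gT d} q.
Arguments cRV {C G gT d} q k.
Arguments cdd {C G gT d} q i.
Arguments cPE {C G gT d} q i.
Arguments cnu {C G gT d} q k l.
Arguments cg {C G gT d} q k l.

Section Recipe.
Variables (C : numClosedFieldType) (G : qgraph C) (gT : finGroupType).
Variables (a : qaction G gT) (d : nat) (rG : mx_representation C [set: gT] d).
Variable ch : qchoice G gT d.

Definition valid_choice : Prop :=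
  cPB ch \in unitmx /\
  (forall e, exists i g, actE a g (cRE ch i) = e) /\
  (forall i j g, actE a g (cRE ch i) = cRE ch j -> i = j) /\
  (forall v, exists k g, actV a g (cRV ch k) = v) /\
  (forall k k' g, actV a g (cRV ch k) = cRV ch k' -> k = k') /\
  (forall i, cPE ch i \in unitmx /\ (cdd ch i <= d)%N /\
     (forall v, fixedv rG (Stab a (cRE ch i)) v <->
                in_span_cols (cPE ch i) (fun j => (j < cdd ch i)%N) v) /\
     (forall v, in_nontriv_isotypic rG (Stab a (cRE ch i)) v <->
                in_span_cols (cPE ch i) (fun j => (cdd ch i <= j)%N) v)) /\
  (forall k l, actE a (cg ch k l) (cRE ch (cnu ch k l)) = (qinc (cRV ch k) l).1).

Section Vertex.
Variable k : 'I_(cN ch).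

Local Notation n := (qdeg (cRV ch k)).

(* the distinct values mu_1 < ... < mu_m among the nu_l *)
Definition qmus : {set 'I_(cI ch)} := [set cnu ch k l | l : 'I_n].
Definition qmu (j : 'I_#|qmus|) : 'I_(cI ch) := enum_val j.

(* remaining columns (l', j), j < d_{mu_l'}, in their original order *)
Definition qcols : {set ('I_#|qmus| * 'I_d)%type} :=
  [set p : ('I_#|qmus| * 'I_d)%type | (p.2 < cdd ch (qmu p.1))%N].

Definition qTheta : 'M[C]_(n * d, #|qcols|) :=
  \matrix_(r, c) (((cnu ch k (unflat r).1 == qmu (enum_val c).1) &&
                   ((unflat r).2 == (enum_val c).2))%:R).

Definition qD : 'M[C]_(n * d) :=
  \matrix_(r, c) (((unflat r).1 == (unflat c).1)%:R *
     (cob (cPB ch) (cPE ch (cnu ch k (unflat r).1)) (rG ((cg ch k (unflat r).1)^-1)%g))^T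
        (unflat r).2 (unflat c).2).

Definition quotA : 'M[C]_(qrows (cRV ch k) * d, #|qcols|) :=
  kron (qA (cRV ch k)) (1%:M : 'M[C]_d) *m qD *m qTheta.
Definition quotB : 'M[C]_(qrows (cRV ch k) * d, #|qcols|) :=
  kron (qB (cRV ch k)) (1%:M : 'M[C]_d) *m qD *m qTheta.

(* degree of v_k in Gamma/R: each e^i_j (j <= d_i) contributes one end for
   each end of e~^i lying in the orbit of v~_k *)
Definition quot_deg : nat :=
  \sum_(i < cI ch) cdd ch i *
     #|[set b : bool | [exists g, actV a g (cRV ch k) == endpt (cRE ch i, b)]]|.

End Vertex.
End Recipe.

(* For a free action every edge stabiliser is trivial, so in the recipe for
   Gamma/R we may take d_i = d and every edge basis B^i equal to the global
   basis B.  We choose B so that R is unitary in it (Weyl's unitary trick: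
   average the Gram matrix over K and factor it).  Then at a quotient vertex
   v_k the recipe gives A_{v_k} = (A (x) I_d) Q and B_{v_k} = (B (x) I_d) Q
   with Q = D Theta, where D is block diagonal with unitary blocks, and Theta
   is unitary because the map l |-> nu_l is injective: two edges at a vertex
   in one K-orbit would force either a non-trivial stabiliser or a vertex
   moved to an adjacent vertex.  The Kostrykin--Schrader conditions are
   invariant under right multiplication by a unitary matrix and pass from
   (A, B) to (A (x) I_d, B (x) I_d), multiplying the rank by d; finally the
   degree of v_k in Gamma/R is d times the degree of v~_k. *)
From HB Require Import structures.
From mathcomp Require Import all_boot all_order all_algebra all_fingroup.
From mathcomp Require Import mxrepresentation.
Set Implicit Arguments.
Unset Strict Implicit.
Unset Printing Implicit Defensive.
Import Order.TTheory GRing.Theory Num.Theory.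
Local Open Scope ring_scope.
Local Open Scope sesquilinear_scope.

Section Kronecker.
Variable C : numClosedFieldType.

Lemma unflatK m n (i : 'I_m) (j : 'I_n) : unflat (mxvec_index i j) = (i, j).
Proof. by rewrite /unflat /mxvec_index cast_ordK enum_rankK. Qed.

Lemma mxvec_index_eq m n (i i' : 'I_m) (j j' : 'I_n) :
  (mxvec_index i j == mxvec_index i' j') = (i == i') && (j == j').
Proof.
apply/eqP/andP => [E|[/eqP-> /eqP->] //].
by move: (congr1 (@unflat _ _) E); rewrite !unflatK => -[-> ->].
Qed.

Lemma kronE r n p q (A : 'M[C]_(r, n)) (B : 'M[C]_(p, q)) i a j b :
  kron A B (mxvec_index i a) (mxvec_index j b) = A i j * B a b.
Proof. by rewrite /kron mxE !unflatK. Qed.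

Lemma sum_mxvec m n (F : 'I_(m * n) -> C) :
  \sum_k F k = \sum_(i < m) \sum_(j < n) F (mxvec_index i j).
Proof.
rewrite pair_big /= (reindex (uncurry (@mxvec_index m n))) /=.
  by apply: eq_bigr => [[i j]].
exact: curry_mxvec_bij.
Qed.

Lemma kron_mul m n p m' n' p' (A : 'M[C]_(m, n)) (B : 'M[C]_(n, p))
   (X : 'M[C]_(m', n')) (Y : 'M[C]_(n', p')) :
  kron A X *m kron B Y = kron (A *m B) (X *m Y).
Proof.
apply/matrixP => r c; case/mxvec_indexP: r => i a; case/mxvec_indexP: c => j b.
rewrite kronE !mxE sum_mxvec big_distrlr /=; apply: eq_bigr => k _.
by apply: eq_bigr => c _; rewrite !kronE mulrACA.
Qed.

Lemma kron1 m n : kron (1%:M : 'M[C]_m) (1%:M : 'M[C]_n) = 1%:M.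
Proof.
apply/matrixP => r c; case/mxvec_indexP: r => i a; case/mxvec_indexP: c => j b.
by rewrite kronE !mxE -natrM mulnb mxvec_index_eq.
Qed.

Lemma kronDl m n p q (A B : 'M[C]_(m, n)) (X : 'M[C]_(p, q)) :
  kron (A + B) X = kron A X + kron B X.
Proof.
apply/matrixP => r c; case/mxvec_indexP: r => i a; case/mxvec_indexP: c => j b.
by rewrite !mxE !unflatK /= mulrDl.
Qed.

Lemma kron_adj m n p q (A : 'M[C]_(m, n)) (B : 'M[C]_(p, q)) :
  (kron A B)^t* = kron (A^t*) (B^t*).
Proof.
apply/matrixP => r c; case/mxvec_indexP: r => i a; case/mxvec_indexP: c => j b.
by rewrite !mxE rmorphM.
Qed.

Lemma kron_tr m n p q (A : 'M[C]_(m, n)) (B : 'M[C]_(p, q)) :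
  (kron A B)^T = kron (A^T) (B^T).
Proof.
apply/matrixP => r c; case/mxvec_indexP: r => i a; case/mxvec_indexP: c => j b.
by rewrite !mxE.
Qed.

Lemma rank_kron_full m n d (A : 'M[C]_(m, n)) :
  row_full A -> \rank (kron A (1%:M : 'M_d)) = (n * d)%N.
Proof.
case/row_fullP => B BA; apply/eqP; rewrite eqn_leq rank_leq_col /=.
have BAk : kron B (1%:M : 'M[C]_d) *m kron A 1%:M = 1%:M.
  by rewrite kron_mul BA mulmx1 kron1.
by rewrite -{1}(mxrank1 C (n * d)) -BAk mxrankM_maxr.
Qed.

Lemma rank_kron m n d (A : 'M[C]_(m, n)) :
  \rank (kron A (1%:M : 'M_d)) = (\rank A * d)%N.
Proof.
rewrite -{1}(mulmx_base A) -[X in kron _ X](mulmx1 (1%:M : 'M[C]_d)) -kron_mul.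
rewrite mxrankMfree ?rank_kron_full ?col_base_full //.
rewrite /row_free -mxrank_tr kron_tr trmx1 rank_kron_full //.
by rewrite /row_full mxrank_tr eq_row_base.
Qed.

(* The block row (A (x) I | B (x) I) is (A | B) (x) I up to a column
   permutation, hence has rank rank (A | B) * p. *)
Lemma rank_row_kron m n p (A B : 'M[C]_(m, n)) :
  \rank (row_mx (kron A (1%:M : 'M_p)) (kron B 1%:M)) = (\rank (row_mx A B) * p)%N.
Proof.
pose W := row_mx (kron (col_mx (1%:M : 'M[C]_n) 0) (1%:M : 'M[C]_p))
                 (kron (col_mx 0 (1%:M : 'M[C]_n)) (1%:M : 'M[C]_p)).
have splitW : row_mx (kron A (1%:M : 'M_p)) (kron B 1%:M) = kron (row_mx A B) 1%:M *m W.
  by rewrite mul_mx_row !kron_mul !mul_row_col !mulmx1 !mulmx0 addr0 add0r.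
have WWt : W *m W^T = 1%:M.
  rewrite tr_row_mx mul_row_col !kron_tr !kron_mul !tr_col_mx !trmx1 !trmx0.
  rewrite !mulmx1 !mul_col_row !mulmx1 !mulmx0 -kronDl.
  by rewrite add_block_mx !addr0 !add0r -scalar_mx_block kron1.
have Wfree : row_free W.
  apply/eqP/anti_leq; rewrite rank_leq_row /=.
  by rewrite -{1}(mxrank1 C ((n + n) * p)) -WWt mxrankM_maxl.
by rewrite splitW mxrankMfree // rank_kron.
Qed.

End Kronecker.

Section KostrykinSchrader.
Variable C : numClosedFieldType.

Lemma adjmxE m n (M : 'M[C]_(m, n)) : adjmx M = M^t*.
Proof. by rewrite /adjmx map_trmx. Qed.

Lemma adjmx_entry m n (M : 'M[C]_(m, n)) i j : (M^t*) i j = (M j i)^*.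
Proof. by rewrite !mxE. Qed.

Lemma adjM m n p (A : 'M[C]_(m, n)) (B : 'M[C]_(n, p)) : (A *m B)^t* = B^t* *m A^t*.
Proof. by rewrite trmx_mul map_mxM. Qed.

Lemma KS_kron r n p (A B : 'M[C]_(r, n)) :
  KS A B n -> KS (kron A (1%:M : 'M_p)) (kron B 1%:M) (n * p).
Proof.
case=> rkAB symAB; split; first by rewrite rank_row_kron rkAB.
rewrite !adjmxE !kron_adj !kron_mul trmx1 map_mx1 mulmx1 -!adjmxE.
by rewrite symAB.
Qed.

Lemma KS_mulmx_unitary r n c (A B : 'M[C]_(r, n)) (Q : 'M[C]_(n, c)) dv :
  Q \is unitarymx -> KS A B dv -> KS (A *m Q) (B *m Q) dv.
Proof.
move=> Qu [rkAB symAB]; split.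
  have -> : row_mx (A *m Q) (B *m Q) = row_mx A B *m block_mx Q 0 0 Q.
    by rewrite mul_row_block !mulmx0 addr0 add0r.
  rewrite mxrankMfree // /row_free mxrank_unitary //.
  apply/unitarymxP; rewrite tr_block_mx map_block_mx !trmx0 !map_mx0 mulmx_block.
  by rewrite (unitarymxP Qu) !mulmx0 !mul0mx !addr0 !add0r -scalar_mx_block.
rewrite !adjmxE !adjM !mulmxA -!(mulmxA _ Q) (unitarymxP Qu) !mulmx1.
by rewrite -!adjmxE symAB.
Qed.

End KostrykinSchrader.

Section UnitaryTrick.
Variables (C : numClosedFieldType) (gT : finGroupType) (d : nat).
Variable rG : mx_representation C [set: gT] d.

Lemma hermitian_pos_factor n (H : 'M[C]_n) :
  H \is hermsymmx -> (forall i, 0 < spectral_diag H 0 i) ->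
  exists2 S, S \in unitmx & S *m S^t* = H.
Proof.
move=> Hherm Xpos; have HE := orthomx_spectralP (hermitian_normalmx Hherm).
set M := spectralmx H in HE; set X := spectral_diag H in HE Xpos.
have Mu : M \is unitarymx := spectral_unitarymx H.
rewrite invmx_unitary // in HE.
pose sq := \row_i sqrtC (X 0 i).
have sq_adj : (diag_mx sq)^t* = diag_mx sq.
  apply/matrixP => i j; rewrite !mxE eq_sym; case: eqP => [->|_].
    by rewrite mulr1n geC0_conj // sqrtC_ge0 ltW.
  by rewrite mulr0n conjC0.
have sq_sq : diag_mx sq *m diag_mx sq = diag_mx X.
  apply/matrixP => i j; rewrite mul_diag_mx !mxE.
  by case: (i == j); rewrite ?mulr1n ?mulr0n ?mulr0 // -expr2 sqrtCK.
exists (M^t* *m diag_mx sq).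
  rewrite unitmx_mul unitarymx_unit ?trmxC_unitary //= unitmxE det_diag unitfE.
  by apply/prodf_neq0 => i _; rewrite mxE sqrtC_eq0 gt_eqF.
by rewrite adjM sq_adj trmxCK mulmxA -(mulmxA _ _ (diag_mx sq)) sq_sq.
Qed.

Definition gram : 'M[C]_d := \sum_(g : gT) rG g *m (rG g)^t*.

Lemma gram_hermitian : gram \is hermsymmx.
Proof.
rewrite is_hermitianmxE expr0 scale1r; apply/eqP/matrixP => i j.
rewrite !mxE !summxE rmorph_sum; apply: eq_bigr => g _.
rewrite !mxE rmorph_sum; apply: eq_bigr => k _.
by rewrite !mxE rmorphM /= conjCK mulrC.
Qed.

Lemma gram_invariant g : rG g *m gram *m (rG g)^t* = gram.
Proof.
rewrite /gram mulmx_sumr mulmx_suml [RHS](reindex_inj (mulgI g)) /=.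
by apply: eq_bigr => h _; rewrite repr_mxM ?inE // adjM !mulmxA.
Qed.

(* The eigenvalues of the Gram matrix are at least 1: the term g = 1
   contributes the identity and the others are positive semidefinite. *)
Lemma gram_eigen_ge1 i : 1 <= spectral_diag gram 0 i.
Proof.
have HE := orthomx_spectralP (hermitian_normalmx gram_hermitian).
set M := spectralmx gram in HE; set X := spectral_diag gram in HE *.
have Mu : M \is unitarymx := spectral_unitarymx _.
rewrite invmx_unitary // in HE.
have -> : X 0 i = (M *m gram *m M^t*) i i.
  rewrite HE !mulmxA (unitarymxP Mu) mul1mx -!mulmxA (unitarymxP Mu) mulmx1.
  by rewrite mxE eqxx mulr1n.
rewrite /gram mulmx_sumr mulmx_suml summxE (bigD1 1%g) //=.
rewrite repr_mx1 trmx1 map_mx1 !mulmx1 (unitarymxP Mu) mxE eqxx mulr1n lerDl.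
rewrite sumr_ge0 // => g _; rewrite mulmxA -mulmxA -adjM !mxE sumr_ge0 // => k _.
by rewrite !mxE mul_conjC_ge0.
Qed.

Lemma unitary_trick : exists P : 'M[C]_d,
  P \in unitmx /\ forall g, invmx P *m rG g *m P \is unitarymx.
Proof.
have [|S Su SS] := hermitian_pos_factor gram_hermitian.
  by move=> i; apply: lt_le_trans (gram_eigen_ge1 i).
exists S; split => // g; apply/unitarymxP.
have -> : invmx S *m rG g *m S *m (invmx S *m rG g *m S)^t* =
    invmx S *m (rG g *m gram *m (rG g)^t*) *m (invmx S)^t*.
  by rewrite -SS !adjM !mulmxA.
rewrite gram_invariant -SS mulmxA mulVmx // mul1mx -adjM mulVmx //.
by rewrite trmx1 map_mx1.
Qed.

End UnitaryTrick.

Lemma orbit_reps (gT : finGroupType) (T : finType) (f : gT -> T -> T)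
  (f1 : forall x, f 1%g x = x) (fM : forall g h x, f (g * h)%g x = f g (f h x)) :
  exists N (r : 'I_N -> T), (forall x, exists i g, f g (r i) = x) /\
                           (forall i j g, f g (r i) = r j -> i = j).
Proof.
have fV g x : f g^-1%g (f g x) = x by rewrite -fM mulVg f1.
pose R := [set x | [forall g, (enum_rank x <= enum_rank (f g x))%N]].
exists #|R|, (fun i => enum_val i); split.
  move=> x; pose O := [set f g x | g : gT].
  have xO : x \in O by apply/imsetP; exists 1%g; rewrite ?f1.
  have [y /imsetP[g0 _ yE] ymin] := arg_minnP (fun y => nat_of_ord (enum_rank y)) xO.
  have yR : y \in R.
    rewrite inE; apply/forallP => g; apply: ymin.
    by apply/imsetP; exists (g * g0)%g; rewrite // fM yE.
  by exists (enum_rank_in yR y), g0^-1%g; rewrite enum_rankK_in // yE fV.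
move=> i j g E; have /[!inE] ri := enum_valP i; have /[!inE] rj := enum_valP j.
have le_ij := forallP ri g; have le_ji := forallP rj g^-1%g.
rewrite E in le_ij; rewrite -E fV in le_ji.
apply/enum_val_inj/enum_rank_inj/val_inj/eqP.
by rewrite eqn_leq le_ij -E le_ji.
Qed.

Section FreeAction.
Variables (C : numClosedFieldType) (G : qgraph C) (gT : finGroupType).
Variable a : qaction G gT.
Hypothesis acta : is_qaction a.

Lemma actVK g v : actV a g^-1%g (actV a g v) = v.
Proof. by case: acta => aV1 [_ [_ [aVM _]]]; rewrite -aVM mulVg aV1. Qed.

Lemma actEK g e : actE a g^-1%g (actE a g e) = e.
Proof. by case: acta => _ [aE1 [_ [_ [aEM _]]]]; rewrite -aEM mulVg aE1. Qed.

Hypothesis freea : free_action a.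

Lemma actE_free g h e : actE a g e = actE a h e -> g = h.
Proof.
move=> E; have [_ [_ [_ [_ [aEM _]]]]] := acta.
have /freea.2 hg1 : actE a (h^-1 * g)%g e = e by rewrite aEM E actEK.
by apply: (mulgI h^-1%g); rewrite hg1 mulVg.
Qed.

Lemma Stab_free e : Stab a e \subset [1 gT]%g.
Proof. by apply/subsetP => h; rewrite !inE => /eqP/freea.2 ->. Qed.

Hypothesis wfG : wf_qgraph G.
Hypothesis noadj : no_adjacent_move a.

Variables (I : nat) (re : 'I_I -> qE G) (v : qV G).
Variables (nu : 'I_(qdeg v) -> 'I_I) (g : 'I_(qdeg v) -> gT).
Hypothesis gE : forall l, actE a (g l) (re (nu l)) = (qinc v l).1.

(* No two edge ends at v lie in the same edge orbit: the element relating
   them would either fix v (hence be trivial, so the ends coincide) or move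
   v to an adjacent vertex. *)
Lemma nu_inj : injective nu.
Proof.
have [aV1 [aE1 [aF1 [_ [aEM [_ [aInc _]]]]]]] := acta.
have [_ [incI [incE _]]] := wfG.
move=> l l' nuE; pose h := (g l' * (g l)^-1)%g.
have e12 : actE a h (qinc v l).1 = (qinc v l').1 by rewrite -!gE -aEM mulgVK nuE.
have endh : endpt (actEnd a h (qinc v l)) = actV a h v by rewrite aInc incE.
rewrite /actEnd e12 in endh.
have [bE|bN] := eqVneq (addb (qinc v l).2 (actF a h (qinc v l).1)) (qinc v l').2.
  have /freea.1 h1 : actV a h v = v by rewrite -endh bE -surjective_pairing incE.
  have ee : (qinc v l).1 = (qinc v l').1 by rewrite -e12 h1 aE1.
  apply: (incI v); rewrite [qinc v l]surjective_pairing [qinc v l']surjective_pairing.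
  by rewrite -ee -bE h1 aF1 addbF.
exfalso; apply: (@noadj h v); exists (qinc v l').1.
move: bN endh (incE v l'); rewrite /endpt /=.
case: (qinc v l') => e2 b2 /=.
by case: (addb _ _); case: b2 => //= _ -> ->; [left | right].
Qed.

Hypothesis reU : forall i j h, actE a h (re i) = re j -> i = j.

(* The ends of edge-orbit representatives whose endpoint lies in the orbit
   of v are in bijection with the edge ends at v. *)
Lemma count_ends :
  (\sum_(i < I) #|[set b : bool | [exists h, actV a h v == endpt (re i, b)]]|
     = qdeg v)%N.
Proof.
have [_ [_ [_ [_ [aEM [_ [aInc _]]]]]]] := acta.
have [_ [_ [incE incS]]] := wfG.
pose S i := [set b : bool | [exists h, actV a h v == endpt (re i, b)]].
pose f l := (nu l, addb (qinc v l).2 (actF a (g l) (re (nu l)))).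
have fI : injective f by move=> l l' [] /nu_inj.
rewrite (eq_bigr (fun i => \sum_(b in S i) 1)%N) => [|i _]; last by rewrite sum1_card.
rewrite pair_big_dep /= sum1_card -[qdeg v]card_ord -(card_image fI).
apply: eq_card => -[i b]; rewrite unfold_in /=; apply/idP/imageP.
  move=> Sb; have /[!inE] /existsP[h /eqP hE] : b \in S i := Sb.
  have : endpt (actEnd a h^-1%g (re i, b)) = v by rewrite aInc -hE actVK.
  case/incS => l yE; exists l => //.
  have e1 : actE a (g l) (re (nu l)) = actE a h^-1%g (re i) by rewrite gE yE.
  have nuE : nu l = i.
    by apply: (@reU _ _ (h * g l)%g); rewrite aEM e1 -aEM mulgV; case: acta => _ [->].
  rewrite nuE in e1.
  by rewrite /f nuE (actE_free e1) yE /= addbK.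
move=> [l _ [-> ->]]; suff : (f l).2 \in S (f l).1 by [].
rewrite inE; apply/existsP; exists (g l)^-1%g; apply/eqP.
have <- : actV a (g l) (endpt (re (nu l), addb (qinc v l).2 (actF a (g l) (re (nu l))))) = v.
  by rewrite -aInc /actEnd /= gE addbK -surjective_pairing incE.
by rewrite actVK.
Qed.

End FreeAction.

(* If the stabiliser is trivial, the whole space is fixed and there is no
   non-trivial isotypic component: any basis with d_i = d is admissible. *)
Lemma trivial_stab_edge_basis (C : numClosedFieldType) (gT : finGroupType) d
  (rG : mx_representation C [set: gT] d) (H : {set gT}) (P : 'M[C]_d) :
  H \subset [1 gT]%g -> P \in unitmx ->
  (forall v, fixedv rG H v <-> in_span_cols P (fun j => (j < d)%N) v) /\
  (forall v, in_nontriv_isotypic rG H v <-> in_span_cols P (fun j => (d <= j)%N) v).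
Proof.
move=> /subsetP H1 Pu; split=> v; split.
- move=> _; exists (invmx P *m v); split; first by move=> j; rewrite ltn_ord.
  by rewrite mulmxA mulmxV // mul1mx.
- by move=> _ h /H1; rewrite inE => /eqP ->; rewrite repr_mx1 mul1mx.
- move=> [[|n] [Ws [HW sub]]].
    exists 0; split; first by move=> j _; rewrite mxE.
    by move: sub; rewrite big_ord0 submx0 mulmx0 => /eqP/(congr1 trmx); rewrite trmxK trmx0.
  have [_ [h /H1 /[!inE] /eqP h1 nt]] := HW ord0.
  by move: nt; rewrite h1 repr_mx1 trmx1 mulmx1 eqxx.
- move=> [c [cz ->]].
  have -> : c = 0 by apply/matrixP => j z; rewrite ord1 mxE cz // -ltnNge ltn_ord.
  exists 0%N, (fun _ => 0); split; first by case.
  by rewrite big_ord0 mulmx0 trmx0 sub0mx.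
Qed.

Section RecipeMatrices.
Variables (C : numClosedFieldType) (G : qgraph C) (gT : finGroupType) (d : nat).
Variables (rG : mx_representation C [set: gT] d) (ch : qchoice G gT d).
Variable k : 'I_(cN ch).

(* With all d_i = d and injective nu, Theta is a permutation matrix. *)
Lemma theta_unitary :
  injective (cnu ch k) -> (forall i, cdd ch i = d) -> qTheta k \is unitarymx.
Proof.
move=> nuI dd; apply/unitarymxP/matrixP => r r'.
case/mxvec_indexP: r => l a0; case/mxvec_indexP: r' => l' a1.
rewrite mxE; under eq_bigr => c _ do rewrite !mxE !unflatK /=.
rewrite mxE mxvec_index_eq.
rewrite -(big_enum_val (fun x : 'I_#|qmus k| * 'I_d =>
  ((cnu ch k l == qmu x.1) && (a0 == x.2))%:R *
  ((cnu ch k l' == qmu x.1) && (a1 == x.2))%:R^*)) /=.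
have lmu : cnu ch k l \in qmus k by apply/imsetP; exists l.
pose j0 := enum_rank_in lmu (cnu ch k l).
have j0E : qmu j0 = cnu ch k l by rewrite /qmu /j0 enum_rankK_in.
have x0in : (j0, a0) \in qcols k by rewrite inE /= dd ltn_ord.
rewrite (bigD1 (j0, a0)) //= big1 ?addr0.
  by rewrite j0E !eqxx /= mul1r conjC_nat (inj_eq nuI) eq_sym [a1 == _]eq_sym.
move=> [j b] /andP[_ ne]; case: eqP => [lj|]; last by rewrite mul0r.
case: eqP => [ab|]; last by rewrite mul0r.
case/negP: ne; apply/eqP; congr (_, _) => //.
by apply: enum_val_inj; rewrite -/(qmu j) -/(qmu j0) j0E.
Qed.

(* If every edge basis is the global basis P and R is unitary in P, then D
   is block diagonal with unitary blocks. *)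
Lemma D_unitary :
  (forall i, cPE ch i = cPB ch) ->
  (forall g, invmx (cPB ch) *m rG g *m cPB ch \is unitarymx) ->
  qD rG k \is unitarymx.
Proof.
move=> PE Yu.
pose Y l := (cob (cPB ch) (cPE ch (cnu ch k l)) (rG (cg ch k l)^-1%g))^T.
have Yu' l : Y l \is unitarymx by rewrite trmx_unitary /cob PE Yu.
have qDE l a j b : qD rG k (mxvec_index l a) (mxvec_index j b) = (l == j)%:R * Y l a b.
  by rewrite mxE !unflatK.
apply/unitarymxP/matrixP => r r'.
case/mxvec_indexP: r => l a0; case/mxvec_indexP: r' => l' a1.
rewrite mxE sum_mxvec mxE mxvec_index_eq.
under eq_bigr => j _ do under eq_bigr => b _ do rewrite adjmx_entry !qDE.
rewrite (bigD1 l) //= [X in _ + X]big1 ?addr0; last first.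
  by move=> j ne; rewrite big1 // => b _; rewrite eq_sym (negbTE ne) !mul0r.
have [<-|ne] := eqVneq l l'; last first.
  by rewrite big1 // => b _; rewrite mul0r conjC0 mulr0.
have /matrixP /(_ a0 a1) := unitarymxP (Yu' l); rewrite !mxE eqxx /= => <-.
by apply: eq_bigr => b _; rewrite !mul1r adjmx_entry.
Qed.

End RecipeMatrices.

(* Orbit representatives, a basis in which R is unitary, and the edge
   decompositions g_l e~^{nu_l} give an admissible choice, at which every
   quotient vertex satisfies the Kostrykin--Schrader conditions. *)
Theorem corollary2 (C : numClosedFieldType) (G : qgraph C) (gT : finGroupType)
  (a : qaction G gT)
  (wfG : wf_qgraph G) (acta : is_qaction a)
  (KSG : forall v : qV G, KS (qA v) (qB v) (qdeg v))
  (freea : free_action a) (noadj : no_adjacent_move a)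
  (d : nat) (rG : mx_representation C [set: gT] d) :
  exists ch : qchoice G gT d,
    valid_choice a rG ch /\
    forall k : 'I_(cN ch),
      KS (quotA rG k) (quotB rG k) (quot_deg a k).
Proof.
have [aV1 [aE1 [_ [aVM [aEM _]]]]] := acta.
have [N [rV [rVs rVu]]] := orbit_reps aV1 aVM.
have [I [rE [rEs rEu]]] := orbit_reps aE1 aEM.
have [PB [PBu PBunit]] := unitary_trick rG.
have [ig igE] : exists ig : qE G -> 'I_I * gT, forall e, actE a (ig e).2 (rE (ig e).1) = e.
  apply: (@fin_all_exists _ (fun=> ('I_I * gT)%type) (fun e p => actE a p.2 (rE p.1) = e)) => e.
  by have [i [g E]] := rEs e; exists (i, g).
pose nu k l := (ig (qinc (rV k) l).1).1; pose gg k l := (ig (qinc (rV k) l).1).2.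
have nuE k l : actE a (gg k l) (rE (nu k l)) = (qinc (rV k) l).1 by exact: igE.
pose ch := @QChoice C G gT d PB I rE N rV (fun _ => d) (fun _ => PB) nu gg.
exists ch; split.
  do 5!(split=> //); split=> // i.
  by split=> //; split=> //; apply: trivial_stab_edge_basis => //; apply: Stab_free.
move=> k; have nuI : injective (cnu ch k) := nu_inj acta freea wfG noadj (nuE k).
rewrite /quotA /quotB -!mulmxA /quot_deg -big_distrr /= [X in KS _ _ X]mulnC.
rewrite (count_ends acta freea wfG noadj (nuE k) rEu).
apply: KS_mulmx_unitary; last exact: KS_kron.
by apply: mul_unitarymx; [exact: (D_unitary k) | exact: (theta_unitary nuI)].
Qed.
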